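(* Let $\Phi : M_m \to M_n$ be a transpose-preserving linear map. If $W^{1+i}_{\min}(C_\Phi) \ge 0$, then there exist matrices $A_1,\dots,A_k \in M_{n,m}$ and a linear map $\Psi: M_m\to M_n$ with $\Psi(X) = 0$ for every symmetric $X\in M_m$, such that \[ \Phi(X) = \sum_j A_j X A_j^T + \Psi(X) \quad\text{for all } X\in M_m; \] consequently $\Phi$ is positive.
   Context: $M_{n,m}$ denotes real $n\times m$ matrices, $M_n = M_{n,n}$, and $M_m\otimes M_n$ is identified with $M_{mn}$ via the Kronecker product. A linear map $\Phi: M_m\to M_n$ is transpose-preserving if $\Phi(X^T) = \Phi(X)^T$ for all $X$; it is positive if $\Phi(X)$ is positive semidefinite whenever $X$ is symmetric positive semidefinite. The Choi matrix is $C_\Phi = \sum_{i,j=1}^m E_{i,j}\otimes\Phi(E_{i,j})$, with $E_{i,j}$ the matrix units. For $A=\sum_j X_j\otimes Y_j\in M_m\otimes M_n$, the partial transpose is $A^\Gamma = \sum_j X_j\otimes Y_j^T$. The numerical range of $A\in M_N(\mathbb{C})$ is $W(A) = \{\mathbf{x}^*A\mathbf{x} : \mathbf{x}\in\mathbb{C}^N, \|\mathbf{x}\|=1\}$. For real $B$, $W^{1+i}(B) = \{c\in\mathbb{R} : c(1+i)\in W(B+iB^\Gamma)\}$, a nonempty compact interval with minimum $W^{1+i}_{\min}(B)$. *)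

From HB Require Import structures.
From mathcomp Require Import all_boot all_order all_algebra.
From mathcomp Require Import reals.
From mathcomp Require Import complex mxtens.

Set Implicit Arguments.
Unset Strict Implicit.
Unset Printing Implicit Defensive.

Import Order.TTheory GRing.Theory Num.Theory.
Local Open Scope ring_scope.

(* M_m (x) M_n is identified with 'M[R]_(m * n) via the Kronecker product
   [tensmx] of mathcomp-real-closed (row/column index (i,k) |-> i*n + k). *)

Definition E_unit (R : realType) (m : nat) (i j : 'I_m) : 'M[R]_m := delta_mx i j.

Definition transpose_preserving (R : realType) (m n : nat)
  (Phi : 'M[R]_m -> 'M[R]_n) : Prop :=
  forall X : 'M[R]_m, Phi X^T = (Phi X)^T.

Definition psd (R : realType) (n : nat) (X : 'M[R]_n) : Prop :=
  X^T = X /\ forall v : 'cV[R]_n, 0 <= (v^T *m X *m v) ord0 ord0.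

Definition positive_map (R : realType) (m n : nat)
  (Phi : 'M[R]_m -> 'M[R]_n) : Prop :=
  forall X : 'M[R]_m, psd X -> psd (Phi X).

Definition choi (R : realType) (m n : nat) (Phi : 'M[R]_m -> 'M[R]_n)
  : 'M[R]_(m * n) :=
  \sum_(i < m) \sum_(j < m) tensmx (E_unit R i j) (Phi (E_unit R i j)).

(* Partial transpose (on the second tensor factor):
   (sum_j X_j (x) Y_j)^Gamma = sum_j X_j (x) Y_j^T, i.e. entrywise
   A^Gamma_{(i,k),(j,l)} = A_{(i,l),(j,k)}. *)
Definition ptrans (R : realType) (m n : nat) (A : 'M[R]_(m * n)) : 'M[R]_(m * n) :=
  \matrix_(p, q)
    A (mxtens_index ((mxtens_unindex p).1, (mxtens_unindex q).2))
      (mxtens_index ((mxtens_unindex q).1, (mxtens_unindex p).2)).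

Definition adjC (R : realType) (p q : nat) (x : 'M[R[i]]_(p, q)) : 'M[R[i]]_(q, p) :=
  (map_mx (@conjc R) x)^T.

Definition cplx (R : realType) (p q : nat) (B : 'M[R]_(p, q)) : 'M[R[i]]_(p, q) :=
  map_mx (fun r : R => Complex r 0) B.

Definition numerical_range (R : realType) (N : nat) (A : 'M[R[i]]_N) : R[i] -> Prop :=
  fun z => exists x : 'cV[R[i]]_N,
      (adjC x *m x) ord0 ord0 = 1 /\ (adjC x *m A *m x) ord0 ord0 = z.

Definition W1i (R : realType) (m n : nat) (B : 'M[R]_(m * n)) : R -> Prop :=
  fun c => numerical_range (cplx B + (Complex 0 1) *: cplx (ptrans B))
                           (Complex c 0 * Complex 1 1).

From HB Require Import structures.
From mathcomp Require Import all_boot all_order all_algebra.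
From mathcomp Require Import reals classical_sets.
From mathcomp Require Import complex mxtens.
From mathcomp Require Import ring lra.

(* Write H = C_Phi, K = H^Gamma and D = H - K; H, K, D are symmetric and D has
   zero diagonal.  For real a, b the unit vector a + ib gives the point
   (q_H(a) + q_H(b)) + i (q_K(a) + q_K(b)) of W(H + iK), where q_B(u) = u^T B u.
   So the hypothesis says: q_D(a) + q_D(b) = 0 and |a|^2 + |b|^2 = 1 imply
   q_H(a) + q_H(b) >= 0.  An S-lemma (the sup of -q_H(u)/q_D(u) over q_D(u) > 0
   is finite) turns this into a real s with H + sD positive semidefinite.
   Writing H + sD = sum_j w_j w_j^T (Schur complement induction) and reshaping
   each w_j into A_j in M_{n,m}, the linear map with Choi matrix H + sD is
   X |-> sum_j A_j X A_j^T, while it equals Phi(X) + s (Phi(X) - Phi(X)^T);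
   hence Phi = sum_j A_j . A_j^T + Psi with Psi(X) = s (Phi(X)^T - Phi(X)),
   which vanishes on symmetric X as Phi preserves transposes. *)

Set Implicit Arguments.
Unset Strict Implicit.
Unset Printing Implicit Defensive.

Import Order.TTheory GRing.Theory Num.Theory.
Local Open Scope ring_scope.

Section BilinearForms.
Variables (R : realFieldType) (N : nat).
Implicit Types (B : 'M[R]_N) (u v w : 'cV[R]_N) (c : R).

Definition form B u v : R := (u^T *m B *m v) 0 0.

Lemma formE B u v : form B u v = \sum_k \sum_j u k 0 * B k j * v j 0.
Proof.
rewrite /form !mxE exchange_big /=; apply: eq_bigr => j _.
by rewrite !mxE mulr_suml; apply: eq_bigr => k _; rewrite !mxE.
Qed.

Lemma formDl B u v w : form B (u + v) w = form B u w + form B v w.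
Proof. by rewrite /form raddfD /= !mulmxDl mxE. Qed.

Lemma formDr B u v w : form B w (u + v) = form B w u + form B w v.
Proof. by rewrite /form mulmxDr mxE. Qed.

Lemma formZl B c u w : form B (c *: u) w = c * form B u w.
Proof. by rewrite /form linearZ /= -!scalemxAl mxE. Qed.

Lemma formZr B c u w : form B w (c *: u) = c * form B w u.
Proof. by rewrite /form -scalemxAr mxE. Qed.

Lemma form0l B w : form B 0 w = 0.
Proof. by rewrite /form linear0 !mul0mx mxE. Qed.

Lemma formDm B B' u w : form (B + B') u w = form B u w + form B' u w.
Proof. by rewrite /form mulmxDr mulmxDl mxE. Qed.

Lemma formZm B c u w : form (c *: B) u w = c * form B u w.
Proof. by rewrite /form -scalemxAr -scalemxAl mxE. Qed.

Lemma formBm B B' u w : form (B - B') u w = form B u w - form B' u w.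
Proof. by rewrite formDm -scaleN1r formZm mulN1r. Qed.

Lemma form_sym B u v : B^T = B -> form B u v = form B v u.
Proof.
move=> sB; rewrite /form -{1}[u^T *m B *m v]trmxK [in LHS]mxE.
by rewrite !trmx_mul !trmxK sB mulmxA.
Qed.

Definition unitv (i : 'I_N) : 'cV[R]_N := delta_mx i 0.

Lemma form_unitv B i j : form B (unitv i) (unitv j) = B i j.
Proof. by rewrite /form trmx_delta -rowE -colE !mxE. Qed.

Lemma form_pm B i j : B^T = B ->
  form B (unitv i + unitv j) (unitv i + unitv j) = B i i + B j j + 2 * B i j /\
  form B (unitv i - unitv j) (unitv i - unitv j) = B i i + B j j - 2 * B i j.
Proof.
move=> sB; have Bji : B j i = B i j by rewrite -{1}sB mxE.
rewrite !formDl !formDr -!scaleN1r !formZl !formZr !form_unitv Bji; split; ring.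
Qed.

Definition sqnorm v : R := form 1%:M v v.

Lemma sqnormE v : sqnorm v = \sum_k v k 0 ^+ 2.
Proof. by rewrite /sqnorm /form mulmx1 mxE; apply: eq_bigr => k _; rewrite mxE. Qed.

Lemma sqnorm_ge0 v : 0 <= sqnorm v.
Proof. by rewrite sqnormE; apply: sumr_ge0 => k _; apply: sqr_ge0. Qed.

Lemma sqnorm_eq0 v : sqnorm v = 0 -> v = 0.
Proof.
rewrite sqnormE => /eqP; rewrite psumr_eq0 => [/allP v0|k _]; last exact: sqr_ge0.
apply/matrixP => k j; rewrite ord1 mxE.
by have /(_ (mem_index_enum k)) := v0 k; rewrite /= sqrf_eq0 => /eqP.
Qed.

Lemma sqnorm_gt0 B w : form B w w != 0 -> 0 < sqnorm w.
Proof.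
rewrite lt_def sqnorm_ge0 andbT; apply: contraNneq => /sqnorm_eq0 ->.
by rewrite form0l.
Qed.

Lemma sqnormZ c v : sqnorm (c *: v) = c ^+ 2 * sqnorm v.
Proof. by rewrite /sqnorm formZl formZr mulrA expr2. Qed.

End BilinearForms.
Arguments unitv {R N}.

Section ComplexForms.
Variables (R : realType) (N : nat).
Implicit Types (S : 'M[R]_N) (a b : 'cV[R]_N).

Lemma sum_Complex (I : Type) (r : seq I) (f g : I -> R) :
  \sum_(i <- r) Complex (f i) (g i) = Complex (\sum_(i <- r) f i) (\sum_(i <- r) g i).
Proof. by elim: r => [|x r IH]; rewrite ?big_nil // !big_cons IH. Qed.

Definition ccol a b : 'cV[R[i]]_N := \col_p Complex (a p 0) (b p 0).

Lemma cplx1 : cplx (1%:M : 'M[R]_N) = 1%:M.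
Proof. by apply/matrixP => i j; rewrite !mxE; case: eqP. Qed.

Lemma adj_cplx_form S a b :
  (adjC (ccol a b) *m cplx S *m ccol a b) 0 0 =
  Complex (form S a a + form S b b) (form S a b - form S b a).
Proof.
rewrite mxE (eq_bigr (fun j => \sum_k Complex
   (a k 0 * S k j * a j 0 + b k 0 * S k j * b j 0)
   (a k 0 * S k j * b j 0 - b k 0 * S k j * a j 0))); last first.
  move=> j _; rewrite mxE mulr_suml; apply: eq_bigr => k _.
  by rewrite /adjC /cplx !mxE; apply: (f_equal2 (@Complex R)); ring.
rewrite exchange_big /=.
under eq_bigr => k _ do rewrite sum_Complex.
rewrite sum_Complex !formE -!big_split -sumrB /=.
apply: (f_equal2 (@Complex R)); apply: eq_bigr => k _.
  by rewrite big_split.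
by rewrite sumrB.
Qed.

Lemma numerical_range_pair (H K : 'M[R]_N) a b :
  H^T = H -> K^T = K -> sqnorm a + sqnorm b = 1 ->
  numerical_range (cplx H + Complex 0 1 *: cplx K)
    (Complex (form H a a + form H b b) (form K a a + form K b b)).
Proof.
move=> sH sK ab1; exists (ccol a b); split.
  have -> : adjC (ccol a b) *m ccol a b = adjC (ccol a b) *m cplx 1%:M *m ccol a b.
    by rewrite cplx1 mulmx1.
  by rewrite adj_cplx_form (form_sym a b (trmx1 _ _)) subrr ab1.
rewrite mulmxDr mulmxDl -scalemxAr -scalemxAl mxE [X in _ + X]mxE.
rewrite !adj_cplx_form (form_sym a b sH) (form_sym a b sK) !subrr.
by apply: (f_equal2 (@Complex R)); ring.
Qed.

End ComplexForms.

Section PartialTranspose.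
Variables (R : realType) (m n : nat).
Implicit Types B : 'M[R]_(m * n).

Lemma ptransE B i k i' l :
  ptrans B (mxtens_index (i, k)) (mxtens_index (i', l)) =
  B (mxtens_index (i, l)) (mxtens_index (i', k)).
Proof. by rewrite /ptrans mxE !mxtens_indexK. Qed.

Lemma ptrans_sym B : B^T = B -> (ptrans B)^T = ptrans B.
Proof.
move=> sB; apply/matrixP => p q; rewrite mxE.
case: (mxtens_indexP p) => i k; case: (mxtens_indexP q) => i' l.
by rewrite !ptransE -{1}sB mxE.
Qed.

Lemma ptrans_sub_sym B : B^T = B -> (B - ptrans B)^T = B - ptrans B.
Proof. by move=> sB; rewrite linearB /= sB ptrans_sym. Qed.

Lemma ptrans_sub_diag B p : (B - ptrans B) p p = 0.
Proof. by rewrite !mxE -surjective_pairing mxtens_unindexK subrr. Qed.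

Lemma W1i_pair_nonneg B : B^T = B -> (forall c, W1i B c -> 0 <= c) ->
  forall a b, sqnorm a + sqnorm b = 1 ->
  form (B - ptrans B) a a + form (B - ptrans B) b b = 0 ->
  0 <= form B a a + form B b b.
Proof.
move=> sB hW a b ab1; rewrite !formBm => D0; apply: hW; rewrite /W1i.
have -> : Complex (form B a a + form B b b) 0 * Complex 1 1 =
    Complex (form B a a + form B b b) (form (ptrans B) a a + form (ptrans B) b b).
  by apply: (f_equal2 (@Complex R)); [ring | lra].
exact: numerical_range_pair sB (ptrans_sym sB) ab1.
Qed.

End PartialTranspose.

Section SLemma.
Variables (R : realType) (N : nat) (H D : 'M[R]_N).
Hypotheses (sH : H^T = H) (sD : D^T = D) (D_diag : forall p, D p p = 0).
Hypothesis HD : forall a b, sqnorm a + sqnorm b = 1 ->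
  form D a a + form D b b = 0 -> 0 <= form H a a + form H b b.

(* Taking b = 0 (after normalising a): q_H >= 0 on the null cone of q_D. *)
Lemma null_nonneg w : form D w w = 0 -> 0 <= form H w w.
Proof.
move=> Dw; have [/sqnorm_eq0 ->|nz] := eqVneq (sqnorm w) 0; first by rewrite form0l.
have w_gt0 : 0 < sqnorm w by rewrite lt_def nz sqnorm_ge0.
set c := (Num.sqrt (sqnorm w))^-1.
have c2 : c ^+ 2 = (sqnorm w)^-1 by rewrite /c exprVn sqr_sqrtr // ltW.
have := HD (a := c *: w) (b := 0 *: w).
rewrite !sqnormZ !formZl !formZr c2 Dw mulVf // expr0n /= !(mul0r, mulr0, addr0).
by move=> /(_ erefl erefl); rewrite mulrA -expr2 c2 pmulr_rge0 // invr_gt0.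
Qed.

Lemma indefinite : D != 0 -> (exists u, 0 < form D u u) /\ (exists v, form D v v < 0).
Proof.
move=> D0; have [[i j] /= Dij] : exists ij : 'I_N * 'I_N, D ij.1 ij.2 != 0.
  apply/existsP; rewrite -negb_forall; apply: contra D0 => /forallP D0.
  by apply/eqP/matrixP => i j; rewrite mxE; apply/eqP/(D0 (i, j)).
have [Dp Dm] := form_pm i j sD; rewrite !D_diag in Dp Dm.
have [Dij_gt0|Dij_le0] := ltrP 0 (D i j).
  by split; [exists (unitv i + unitv j) | exists (unitv i - unitv j)]; lra.
have Dij_lt0 : D i j < 0 by rewrite lt_neqAle Dij.
by split; [exists (unitv i - unitv j) | exists (unitv i + unitv j)]; lra.
Qed.

(* Mixing u (q_D(u) > 0) and v (q_D(v) < 0) into a null pair of unit total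
   norm separates the ratios -q_H/q_D on the two sides. *)
Lemma ratio_le u v : 0 < form D u u -> form D v v < 0 ->
  - form H u u / form D u u <= - form H v v / form D v v.
Proof.
move=> Du Dv.
have nu := sqnorm_gt0 (lt0r_neq0 Du); have nv := sqnorm_gt0 (ltr0_neq0 Dv).
set t := (- form D v v * sqnorm u + form D u u * sqnorm v)^-1.
have t_gt0 : 0 < t by rewrite invr_gt0; nra.
have ht : t * (- form D v v * sqnorm u + form D u u * sqnorm v) = 1.
  by rewrite mulVf //; nra.
set al := Num.sqrt (- form D v v * t).
set be := Num.sqrt (form D u u * t).
have al2 : al ^+ 2 = - form D v v * t by rewrite sqr_sqrtr //; nra.
have be2 : be ^+ 2 = form D u u * t by rewrite sqr_sqrtr //; nra.
have := HD (a := al *: u) (b := be *: v).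
rewrite !sqnormZ !formZl !formZr !mulrA -!expr2 al2 be2.
move=> /(_ _ _) hk; have {}hk := hk ltac:(nra) ltac:(nra).
have cross : 0 <= - form D v v * form H u u + form D u u * form H v v by nra.
rewrite -subr_le0.
have -> : - form H u u / form D u u - - form H v v / form D v v =
    (- form D v v * form H u u + form D u u * form H v v) /
    (form D u u * form D v v).
  by field; apply/andP; split; [exact: ltr0_neq0 | exact: lt0r_neq0].
by apply: mulr_ge0_le0 => //; rewrite invr_le0; nra.
Qed.

(* s = sup of -q_H(u)/q_D(u) over q_D(u) > 0, finite by ratio_le. *)
Lemma S_lemma : exists s : R, psd (H + s *: D).
Proof.
suff [s hs] : exists s : R, forall w, 0 <= form H w w + s * form D w w.
  exists s; split; first by rewrite linearD linearZ /= sH sD.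
  by move=> w; have := hs w; rewrite -formZm -formDm.
have [D0|D0] := eqVneq D 0.
  exists 0 => w; rewrite mul0r addr0; apply: null_nonneg.
  by rewrite D0 /form mulmx0 mul0mx mxE.
have [[u0 Du0] [v0 Dv0]] := indefinite D0.
pose E := [set - form H u u / form D u u | u in [set u | 0 < form D u u]]%classic.
have ubE v : form D v v < 0 -> ubound E (- form H v v / form D v v).
  by move=> Dv _ [u Du <-]; apply: ratio_le.
have E0 : (E !=set0)%classic by exists (- form H u0 u0 / form D u0 u0), u0.
have hE : has_ubound E by exists (- form H v0 v0 / form D v0 v0); apply: ubE.
exists (sup E) => w; have [Dw|Dw|Dw] := ltrgtP 0 (form D w w).
- have : - form H w w / form D w w <= sup E by apply: ub_le_sup => //; exists w.
  by rewrite ler_pdivrMr // => h; lra.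
- have : sup E <= - form H w w / form D w w by apply: ge_sup => //; apply: ubE.
  by rewrite ler_ndivlMr // => h; lra.
- by rewrite -Dw mulr0 addr0; apply: null_nonneg.
Qed.

End SLemma.

(* Every positive semidefinite matrix is a finite sum of rank-one matrices
   w w^T, by repeatedly subtracting the Schur complement of a nonzero pivot. *)
Section RankOneDecomposition.
Variables (R : realType) (N : nat).
Implicit Types (P : 'M[R]_N) (v : 'cV[R]_N).

Lemma psd_form P : psd P -> forall v, 0 <= form P v v.
Proof. by case. Qed.

Lemma psd_zero_diag P i j : psd P -> P j j = 0 -> P i j = 0.
Proof.
move=> hP Pjj; have [sP _] := hP; apply/eqP/negP => Pij.
have Pji : P j i = P i j by rewrite -{1}sP mxE.
set t := - (P i i + 1) / (2 * P i j).
have := psd_form hP (t *: unitv j + unitv i).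
rewrite !formDl !formDr !formZl !formZr !form_unitv Pjj Pji.
have -> : t * P i j = - (P i i + 1) / 2 by rewrite /t; field; apply/negP.
by rewrite !mulr0; lra.
Qed.

Lemma form_outer P i v :
  form (col i P *m (col i P)^T) v v = form P v (unitv i) ^+ 2.
Proof.
rewrite /form; set c := col i P.
have -> : v^T *m (c *m c^T) *m v = (v^T *m c) *m (v^T *m c)^T.
  by rewrite trmx_mul trmxK !mulmxA.
by rewrite /unitv -[in RHS]mulmxA -colE -/c [LHS]mxE big_ord1 [X in _ * X]mxE expr2.
Qed.

Section SchurStep.
Variables (P : 'M[R]_N) (i : 'I_N).
Hypotheses (hP : psd P) (Pii : P i i != 0).
Let c := col i P.
Let Q := P - (P i i)^-1 *: (c *m c^T).

Lemma psd_pivot_gt0 : 0 < P i i.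
Proof. by rewrite lt_def Pii -form_unitv psd_form. Qed.

Lemma schur_entry k j : Q k j = P k j - (P i i)^-1 * (P k i * P j i).
Proof. by rewrite /Q !mxE big_ord1 !mxE. Qed.

(* Q is psd: q_Q(v) = q_P(v - (v^T P e_i / P i i) e_i). *)
Lemma schur_psd : psd Q.
Proof.
have [sP _] := hP; split; first by rewrite /Q linearB linearZ /= trmx_mul trmxK sP.
move=> v; rewrite -/(form Q v v) /Q formBm formZm form_outer.
set s := form P v (unitv i).
have := psd_form hP (v - (s / P i i) *: unitv i).
rewrite -scaleN1r scalerA !formDl !formDr !formZl !formZr form_unitv.
rewrite (form_sym _ v sP) -/s.
have pp := psd_pivot_gt0.
have -> : -1 * (s / P i i) * (-1 * (s / P i i) * P i i) = s ^+ 2 / P i i.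
  by field; rewrite lt0r_neq0.
have -> : -1 * (s / P i i) * s = - (s ^+ 2 / P i i) by field; rewrite lt0r_neq0.
by rewrite mulrC; lra.
Qed.

(* The Schur complement has strictly smaller diagonal support. *)
Lemma schur_diag_pivot : Q i i = 0.
Proof. by rewrite schur_entry; field; rewrite lt0r_neq0 // psd_pivot_gt0. Qed.

Lemma schur_diag_zero j : P j j = 0 -> Q j j = 0.
Proof.
move=> Pjj; have [sP _] := hP.
have Pji : P j i = 0 by rewrite -{1}sP mxE; apply: psd_zero_diag.
by rewrite schur_entry Pjj Pji mul0r mulr0 subr0.
Qed.

Lemma schur_split :
  P = Q + ((Num.sqrt (P i i))^-1 *: c) *m ((Num.sqrt (P i i))^-1 *: c)^T.
Proof.
rewrite linearZ /= -scalemxAl -scalemxAr scalerA -expr2 exprVn sqr_sqrtr.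
  by rewrite /Q subrK.
exact: ltW psd_pivot_gt0.
Qed.

End SchurStep.

(* Induction measure: the set of nonzero diagonal entries. *)
Definition diag_support P : {set 'I_N} := [set j | P j j != 0].

Lemma diag_support_schur P i : psd P -> P i i != 0 ->
  (#|diag_support (P - (P i i)^-1 *: (col i P *m (col i P)^T))| <
   #|diag_support P|)%N.
Proof.
move=> hP Pii; rewrite /diag_support [#|[set j | P j j != 0]|](cardsD1 i).
rewrite inE Pii ltnS subset_leq_card //.
apply/fintype.subsetP => j; rewrite !inE => Qjj; apply/andP; split.
  by apply: contraNneq Qjj => ->; rewrite schur_diag_pivot.
by apply: contra Qjj => /eqP Pjj; rewrite schur_diag_zero.
Qed.

Lemma psd_rank_one_sum P : psd P ->
  exists k (w : 'I_k -> 'cV[R]_N), P = \sum_(j < k) w j *m (w j)^T.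
Proof.
move: {2}#|diag_support P| (leqnn #|diag_support P|) => r.
elim: r P => [|r IH] P; rewrite ?leqn0 => supp hP.
  exists 0, (fun _ => 0); rewrite big_ord0; apply/matrixP => a b; rewrite mxE.
  apply: psd_zero_diag => //; apply/eqP.
  by move: supp; rewrite cards_eq0 => /eqP/setP/(_ b); rewrite !inE => /negbFE.
case: (set_0Vmem (diag_support P)) => [supp0 | [p]].
  by apply: IH => //; rewrite supp0 cards0.
rewrite inE => Ppp.
have [k [w ew]] := IH _ (leq_trans (diag_support_schur hP Ppp) supp) (schur_psd hP Ppp).
exists k.+1, (fun j => if unlift ord0 j is Some j' then w j'
                       else (Num.sqrt (P p p))^-1 *: col p P).
rewrite big_ord_recl /= unlift_none {1}(schur_split hP Ppp) ew addrC.
by congr (_ + _); apply: eq_bigr => j _; rewrite liftK.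
Qed.

End RankOneDecomposition.

(* The inverse Choi correspondence M |-> (X |-> choi_map X M), which is
   linear in M, sends C_Phi to Phi, M^Gamma to the transposed map, and a
   rank-one w w^T to a congruence X |-> A X A^T. *)
Section ChoiMap.
Variables (R : realType) (m n : nat).
Implicit Types (X : 'M[R]_m) (M : 'M[R]_(m * n)).

Definition choi_map X M : 'M[R]_n :=
  \matrix_(a, b) \sum_i \sum_i' X i i' * M (mxtens_index (i, a)) (mxtens_index (i', b)).

Lemma choi_map_is_linear X : linear (choi_map X).
Proof.
move=> c M M'; apply/matrixP => a b; rewrite !mxE mulr_sumr -big_split /=.
apply: eq_bigr => i _; rewrite mulr_sumr -big_split /=.
by apply: eq_bigr => i' _; rewrite !mxE; ring.
Qed.

HB.instance Definition _ X := GRing.isLinear.Build R 'M[R]_(m * n) 'M[R]_n *:%R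
  (choi_map X) (choi_map_is_linear X).

Lemma choi_map_ptrans X M : choi_map X (ptrans M) = (choi_map X M)^T.
Proof.
apply/matrixP => a b; rewrite !mxE; apply: eq_bigr => i _.
by apply: eq_bigr => i' _; rewrite ptransE.
Qed.

Definition reshape (w : 'cV[R]_(m * n)) : 'M[R]_(n, m) :=
  \matrix_(k, i) w (mxtens_index (i, k)) 0.

Lemma choi_map_rank_one X (w : 'cV[R]_(m * n)) :
  choi_map X (w *m w^T) = reshape w *m X *m (reshape w)^T.
Proof.
apply/matrixP => a b; rewrite !mxE exchange_big /=; apply: eq_bigr => i' _.
rewrite !mxE mulr_suml; apply: eq_bigr => i _.
by rewrite !mxE big_ord1 !mxE; ring.
Qed.

Lemma sum_delta2 (i i' : 'I_m) (F : 'I_m -> 'I_m -> R) :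
  \sum_a \sum_b E_unit R a b i i' * F a b = F i i'.
Proof.
rewrite (bigD1 i) //= [X in _ + X]big1 ?addr0 => [|a ai]; last first.
  by rewrite big1 // => b _; rewrite mxE [i == a]eq_sym (negbTE ai) mul0r.
rewrite (bigD1 i') //= big1 ?addr0 => [|b bi']; first by rewrite mxE !eqxx mul1r.
by rewrite mxE [i' == b]eq_sym (negbTE bi') andbF mul0r.
Qed.

Variable Phi : {linear 'M[R]_m -> 'M[R]_n}.

Lemma choiE i k i' l :
  choi Phi (mxtens_index (i, k)) (mxtens_index (i', l)) = Phi (E_unit R i i') k l.
Proof.
rewrite /choi summxE -[RHS](sum_delta2 i i' (fun a b => Phi (E_unit R a b) k l)).
apply: eq_bigr => a _; rewrite summxE; apply: eq_bigr => b _.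
by rewrite tensmxE.
Qed.

Lemma choi_map_choi X : choi_map X (choi Phi) = Phi X.
Proof.
apply/matrixP => a b; rewrite /choi_map mxE [in RHS](matrix_sum_delta X) linear_sum summxE.
apply: eq_bigr => i _; rewrite linear_sum summxE; apply: eq_bigr => i' _.
by rewrite linearZ mxE choiE.
Qed.

Lemma choi_sym : transpose_preserving Phi -> (choi Phi)^T = choi Phi.
Proof.
move=> tpP; apply/matrixP => p q; rewrite mxE.
case: (mxtens_indexP p) => i k; case: (mxtens_indexP q) => i' l.
by rewrite !choiE /E_unit -trmx_delta tpP mxE.
Qed.

End ChoiMap.

Section SkewPart.
Variables (R : realType) (m n : nat) (Phi : {linear 'M[R]_m -> 'M[R]_n}) (s : R).

Definition skew_part (X : 'M[R]_m) : 'M[R]_n := s *: ((Phi X)^T - Phi X).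

Lemma skew_part_is_linear : linear skew_part.
Proof.
move=> c X Y; rewrite /skew_part !linearP /=.
by apply/matrixP => i j; rewrite !mxE; ring.
Qed.

HB.instance Definition _ := GRing.isLinear.Build R 'M[R]_m 'M[R]_n *:%R
  skew_part skew_part_is_linear.

Lemma skew_part_sym X : transpose_preserving Phi -> X^T = X -> skew_part X = 0.
Proof. by move=> tpP sX; rewrite /skew_part -tpP sX subrr scaler0. Qed.

(* If C_Phi + s (C_Phi - C_Phi^Gamma) = sum_j w_j w_j^T, applying choi_map X
   to both sides gives Phi(X) + s (Phi(X) - Phi(X)^T) = sum_j A_j X A_j^T. *)
Lemma choi_shift_decomposition k (w : 'I_k -> 'cV[R]_(m * n)) :
  choi Phi + s *: (choi Phi - ptrans (choi Phi)) = \sum_(j < k) w j *m (w j)^T ->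
  forall X, Phi X = \sum_(j < k) reshape (w j) *m X *m (reshape (w j))^T + skew_part X.
Proof.
move=> ew X; have := congr1 (choi_map X) ew.
rewrite linear_sum linearD linearZ linearB /= choi_map_ptrans choi_map_choi.
under eq_bigr => j _ do rewrite choi_map_rank_one.
by move=> <-; apply/matrixP => a b; rewrite !mxE; ring.
Qed.

End SkewPart.

Section Congruence.
Variables (R : realType) (m n : nat).

Lemma psd_congruence (A : 'M[R]_(n, m)) (X : 'M[R]_m) : psd X -> psd (A *m X *m A^T).
Proof.
move=> [sX hX]; split; first by rewrite !trmx_mul trmxK sX mulmxA.
by move=> v; have := hX (A^T *m v); rewrite trmx_mul trmxK !mulmxA.
Qed.

Lemma psd_sum k (F : 'I_k -> 'M[R]_n) : (forall j, psd (F j)) -> psd (\sum_(j < k) F j).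
Proof.
move=> hF; split.
  by rewrite linear_sum /=; apply: eq_bigr => j _; case: (hF j).
move=> v; rewrite mulmx_sumr mulmx_suml summxE.
by apply: sumr_ge0 => j _; case: (hF j).
Qed.

End Congruence.

Theorem theorem4p3 (R : realType) (m n : nat)
    (Phi : {linear 'M[R]_m -> 'M[R]_n}) :
  transpose_preserving Phi ->
  (forall c : R, W1i (choi Phi) c -> 0 <= c) ->
  (exists (k : nat) (A : 'I_k -> 'M[R]_(n, m))
          (Psi : {linear 'M[R]_m -> 'M[R]_n}),
      (forall X : 'M[R]_m, X^T = X -> Psi X = 0) /\
      (forall X : 'M[R]_m,
          Phi X = \sum_(j < k) (A j *m X *m (A j)^T) + Psi X))
  /\ positive_map Phi.
Proof.
move=> tpP hW; have sH := choi_sym tpP.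
have [s psdM] := S_lemma sH (ptrans_sub_sym sH) (@ptrans_sub_diag _ _ _ _)
  (W1i_pair_nonneg sH hW).
have [k [w ew]] := psd_rank_one_sum psdM.
have decomp := choi_shift_decomposition ew.
split.
  exists k, (fun j => reshape (w j)), (skew_part Phi s).
  by split=> // X; apply: skew_part_sym.
move=> X psdX; have sX : X^T = X by case: psdX.
rewrite decomp (skew_part_sym s tpP sX) addr0.
by apply: psd_sum => j; apply: psd_congruence.
Qed.
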